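(* Let $E$ be an irreducible IL FS encoder with $s$ states. Then for every positive integer $\ell$ there exists a state $z\in\mathcal{Z}$ such that $$\sum_{x^\ell\in\mathcal{X}^\ell}2^{-L[f(z,x^\ell)]}\le 1.$$
   Context: A finite-state (FS) encoder is a quintuple $E=(\mathcal{X},\mathcal{Y},\mathcal{Z},f,g)$, where $\mathcal{X}$ is a finite source alphabet of size $\alpha$, $\mathcal{Y}$ is a finite set of binary strings (possibly containing the empty string, of length $0$), $\mathcal{Z}$ is a finite set of $s$ states, $f:\mathcal{Z}\times\mathcal{X}\to\mathcal{Y}$ is the output function and $g:\mathcal{Z}\times\mathcal{X}\to\mathcal{Z}$ is the next-state function. For $z\in\mathcal{Z}$ and $x^n=(x_1,\dots,x_n)\in\mathcal{X}^n$, set $z_1=z$, $z_{i+1}=g(z_i,x_i)$; write $g(z,x^n)=z_{n+1}$ and let $f(z,x^n)$ denote the binary string obtained by concatenating $f(z_1,x_1),\dots,f(z_n,x_n)$; its length is $L[f(z,x^n)]=\sum_{i=1}^n L[f(z_i,x_i)]$, where $L(\cdot)$ denotes the length of a binary string. The encoder is information lossless (IL) if for every $z\in\mathcal{Z}$ and every $n\ge1$, the map $x^n\mapsto (f(z,x^n),g(z,x^n))$ is injective on $\mathcal{X}^n$. The Kraft matrix of $E$ is the $s\times s$ nonnegative matrix $K$ with entries $K_{zz'}=\sum_{\{x\in\mathcal{X}:\ g(z,x)=z'\}}2^{-L[f(z,x)]}$. The encoder is called irreducible if $K$ is an irreducible matrix, equivalently, if for every $z,z'\in\mathcal{Z}$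 there exist $n\ge 1$ and $x^n$ with $g(z,x^n)=z'$. *)

From HB Require Import structures.
From mathcomp Require Import all_boot all_order all_algebra.
Set Implicit Arguments. Unset Strict Implicit. Unset Printing Implicit Defensive.
Import Order.TTheory GRing.Theory Num.Theory.

(* A finite-state encoder E = (X, Y, Z, f, g): X is the finite source
   alphabet, Z the finite state set, outputs are binary strings (seq bool;
   the output set Y is the finite image of f), f the output function and
   g the next-state function. *)

Section FSEncoder.
Variables (X Z : finType) (f : Z -> X -> seq bool) (g : Z -> X -> Z).

Fixpoint fout (z : Z) (xs : seq X) : seq bool :=
  match xs with
  | [::] => [::]
  | x :: xs' => f z x ++ fout (g z x) xs'
  end.

Fixpoint gnext (z : Z) (xs : seq X) : Z :=
  match xs with
  | [::] => z
  | x :: xs' => gnext (g z x) xs'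
  end.

Definition IL_encoder : Prop :=
  forall (z : Z) (n : nat), (0 < n)%N ->
    injective (fun w : n.-tuple X => (fout z w, gnext z w)).

Definition irreducible_encoder : Prop :=
  forall z z' : Z, exists (n : nat) (w : n.-tuple X),
    (0 < n)%N /\ gnext z w = z'.

End FSEncoder.

(* McMillan's argument applied to the Kraft sums [S_n(z) = \sum_{x^n} 2^{-L[f(z,x^n)]}].
   Information losslessness bounds [S_n(z)] polynomially: the words with a given
   output length k and final state number at most 2^k, and k <= n M where M is
   the longest single output.  Conversely [S_n(z) 2^{nM}] is an integer, so if
   every [S_l(z)] exceeded 1 it would be at least [1 + 2^{-lM}], and since
   [S_{a+b}(z) = \sum_{x^a} 2^{-L[f(z,x^a)]} S_b(g(z,x^a))] the sums [S_{ml}]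
   would grow exponentially in m. *)
From HB Require Import structures.
From mathcomp Require Import all_boot all_order all_algebra.
From mathcomp Require Import zify lra.
Set Implicit Arguments. Unset Strict Implicit. Unset Printing Implicit Defensive.
Import Order.TTheory GRing.Theory Num.Theory.
Local Open Scope ring_scope.

Lemma big_tuple_cons {R : Type} {idx : R} {op : Monoid.com_law idx}
    {T : finType} n (F : seq T -> R) :
  \big[op/idx]_(w : n.+1.-tuple T) F w =
  \big[op/idx]_(x : T) \big[op/idx]_(w : n.-tuple T) F (x :: w).
Proof.
rewrite pair_bigA /=.
rewrite (reindex (fun p : T * n.-tuple T => [tuple of p.1 :: p.2])) //=.
exists (fun w : n.+1.-tuple T => (thead w, [tuple of behead w])).
  by case=> x w _ /=; rewrite theadE; congr pair; apply: val_inj.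
by move=> w _; rewrite [RHS]tuple_eta.
Qed.

Lemma big_tuple0 {R : Type} {idx : R} {op : Monoid.com_law idx}
    {T : finType} (F : seq T -> R) :
  \big[op/idx]_(w : 0.-tuple T) F w = F [::].
Proof.
by rewrite (big_pred1 [tuple]) // => w; apply/esym/eqP; exact: tuple0.
Qed.

Lemma bernoulli_ineq (R : realDomainType) (x : R) n :
  0 <= x -> 1 + x *+ n <= (1 + x) ^+ n.
Proof.
move=> x_ge0; elim: n => [|n IHn]; first by rewrite mulr0n addr0 expr0.
have xn_ge0 : 0 <= x *+ n by rewrite mulrn_wge0.
have := ler_wpM2r (addr_ge0 ler01 x_ge0) IHn.
rewrite exprS mulrC mulrS; nra.
Qed.

Lemma exists_linear_lt_exp2 a b : exists k, (a * k + b < 2 ^ k)%N.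
Proof.
set n := (a.*2 + b).+1; exists (n + n).
have := ltn_expl n (ltnSn 1); rewrite expnD /n; nia.
Qed.

Section KraftSums.
Variables (R : realFieldType) (X Z : finType).
Variables (f : Z -> X -> seq bool) (g : Z -> X -> Z).

Local Notation fout := (fout f g).
Local Notation gnext := (gnext g).
Local Notation weight z := (fun s : seq X => 2%:R ^- size (fout z s) : R).

Definition kraft_sum n z : R :=
  \sum_(w : n.-tuple X) 2%:R ^- size (fout z w).

Lemma kraft_sum0 z : kraft_sum 0 z = 1.
Proof. by rewrite /kraft_sum (big_tuple0 (weight z)) /= expr0 invr1. Qed.

Lemma kraft_sumD a b z :
  kraft_sum (a + b) z =
  \sum_(w : a.-tuple X) 2%:R ^- size (fout z w) * kraft_sum b (gnext z w).
Proof.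
elim: a z => [|a IHa] z.
  rewrite add0n (big_tuple0 (fun s => weight z s * kraft_sum b (gnext z s))).
  by rewrite /= expr0 invr1 mul1r.
rewrite addSn /kraft_sum (big_tuple_cons _ (weight z)).
rewrite (big_tuple_cons _ (fun s => weight z s * kraft_sum b (gnext z s))).
apply: eq_bigr => x _ /=.
under eq_bigr => w _ do rewrite size_cat exprD invfM.
rewrite -mulr_sumr -/(kraft_sum _ _) IHa mulr_sumr; apply: eq_bigr => w _ /=.
by rewrite size_cat exprD invfM mulrA.
Qed.

Definition max_output := (\max_(p : Z * X) size (f p.1 p.2))%N.

Lemma size_fout_le z (w : seq X) : (size (fout z w) <= size w * max_output)%N.
Proof.
elim: w z => [|x w IHw] z //=.
by rewrite size_cat mulSn leq_add ?(leq_bigmax (z, x)).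
Qed.

Lemma kraft_sum_scaled_nat n z :
  exists N : nat, kraft_sum n z * (2 ^ (n * max_output))%:R = N%:R.
Proof.
exists (\sum_(w : n.-tuple X) 2 ^ (n * max_output - size (fout z w)))%N.
rewrite /kraft_sum mulr_suml natr_sum; apply: eq_bigr => w _.
have := size_fout_le z w; rewrite size_tuple => /subnK {1}<-.
by rewrite expnD natrM !natrX mulrCA mulVf ?mulr1 // expf_neq0 ?pnatr_eq0.
Qed.

Lemma kraft_sum_gt1 n z :
  1 < kraft_sum n z -> 1 + (2 ^ (n * max_output))%:R^-1 <= kraft_sum n z.
Proof.
have [N scaledE] := kraft_sum_scaled_nat n z.
have q_gt0 : 0 < (2 ^ (n * max_output))%:R :> R by rewrite ltr0n expn_gt0.
have -> : kraft_sum n z = N%:R / (2 ^ (n * max_output))%:R.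
  by rewrite -scaledE mulfK ?gt_eqF.
rewrite ltr_pdivlMr // mul1r ltr_nat => lt_qN.
by rewrite ler_pdivlMr // mulrDl mul1r mulVf ?gt_eqF // natr1 ler_nat.
Qed.

Lemma kraft_sum_mul_ge l c :
  (forall z, c <= kraft_sum l z) -> 0 <= c ->
  forall m z, c ^+ m <= kraft_sum (m * l) z.
Proof.
move=> c_le c_ge0; elim=> [|m IHm] z; first by rewrite mul0n kraft_sum0 expr0.
rewrite mulSn kraft_sumD exprS.
apply: (le_trans (ler_wpM2r (exprn_ge0 _ c_ge0) (c_le z))).
rewrite [kraft_sum l z]/kraft_sum mulr_suml; apply: ler_sum => w _.
by rewrite ler_wpM2l ?invr_ge0 ?exprn_ge0 ?ler0n ?IHm.
Qed.

(* With [q = 2^{lM}], Bernoulli gives [(1 + 1/q)^q >= 2], so [q k] blocks of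
   length l multiply the Kraft sum by at least [2^k]. *)
Lemma kraft_sum_gt1_exp_growth l :
  (forall z, 1 < kraft_sum l z) ->
  forall k z, (2 ^ k)%:R <= kraft_sum (2 ^ (l * max_output) * k * l) z.
Proof.
move=> all_gt1 k z; set q := (2 ^ (l * max_output))%N.
have c_le z' : 1 + q%:R^-1 <= kraft_sum l z' by exact: kraft_sum_gt1.
have c_ge0 : 0 <= 1 + q%:R^-1 :> R by rewrite addr_ge0 ?invr_ge0.
have two_le : 2%:R <= (1 + q%:R^-1 : R) ^+ q.
  apply: le_trans (bernoulli_ineq _ _); last by rewrite invr_ge0.
  by rewrite -[_ *+ q]mulr_natr mulVf -?mulr2n // pnatr_eq0 expn_eq0.
apply: le_trans (kraft_sum_mul_ge c_le c_ge0 (q * k) z).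
by rewrite natrX exprM lerXn2r ?nnegrE ?ler0n ?exprn_ge0.
Qed.

Hypothesis IL : IL_encoder f g.

Lemma card_fout_fiber n z k z' : (0 < n)%N ->
  (#|[pred w : n.-tuple X | (size (fout z w) == k) && (gnext z w == z')]|
    <= 2 ^ k)%N.
Proof.
move=> n_gt0.
rewrite -[in X in (_ <= X)%N](card_bool) -card_tuple.
apply: (@leq_card_in _ _
  (fun w : n.-tuple X => insubd (nseq_tuple k false) (fout z w))).
move=> w1 w2; rewrite !inE => /andP[/eqP size1 /eqP end1] /andP[/eqP size2 /eqP end2].
move=> /(congr1 val); rewrite !val_insubd size1 size2 eqxx => fout_eq.
by apply: (IL (z := z) n_gt0); rewrite /= fout_eq end1 end2.
Qed.

Lemma kraft_sum_le n z : (0 < n)%N ->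
  kraft_sum n z <= (#|Z| * (n * max_output).+1)%:R.
Proof.
move=> n_gt0.
rewrite /kraft_sum (partition_big (fun w : n.-tuple X =>
   (inord (size (fout z w)) : 'I_(n * max_output).+1, gnext z w)) xpredT) //.
apply: le_trans (_ : \sum_(p : 'I_(n * max_output).+1 * Z) (1 : R) <= _);
  last by rewrite sumr_const card_prod card_ord mulnC.
apply: ler_sum => -[k z'] _.
have fiberE (w : n.-tuple X) :
    ((inord (size (fout z w)) : 'I_(n * max_output).+1, gnext z w) == (k, z')) =
    (size (fout z w) == k) && (gnext z w == z').
  rewrite xpair_eqE -val_eqE /= inordK //.
  by have := size_fout_le z w; rewrite size_tuple ltnS.
rewrite (eq_bigl _ _ fiberE) (eq_bigr (fun _ => 2%:R ^- k)); last first.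
  by move=> w /andP[/eqP -> _].
rewrite sumr_const -[X in X <= _]mulr_natr.
apply: (@le_trans _ _ (2%:R ^- k * (2 ^ k)%:R)).
  by rewrite ler_wpM2l ?invr_ge0 ?exprn_ge0 ?ler0n ?ler_nat ?card_fout_fiber.
by rewrite natrX mulVf ?expf_neq0 ?pnatr_eq0.
Qed.

End KraftSums.

Theorem mainTheorem4 (R : realFieldType) (X Z : finType)
    (f : Z -> X -> seq bool) (g : Z -> X -> Z) :
  (0 < #|Z|)%N ->
  IL_encoder f g ->
  irreducible_encoder g ->
  forall l : nat, (0 < l)%N ->
  exists z : Z,
    \sum_(w : l.-tuple X) ((2%:R : R) ^- size (fout f g z w)) <= 1.
Proof.
move=> Z_gt0 IL _ l l_gt0; have /card_gt0P[z0 _] := Z_gt0.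
have [/existsP[z le1] | /existsPn not_le1] :=
  boolP [exists z, kraft_sum R f g l z <= 1]; first by exists z.
have all_gt1 z : 1 < kraft_sum R f g l z by rewrite ltNge not_le1.
set q := (2 ^ (l * max_output f))%N.
have [k lt_exp] := exists_linear_lt_exp2 (#|Z| * (q * l * max_output f)) #|Z|.
have qkl_gt0 : (0 < q * k * l)%N.
  rewrite !muln_gt0 /q expn_gt0 l_gt0 andbT /= lt0n.
  by apply: contraTneq lt_exp => ->; rewrite muln0 -leqNgt.
have := le_trans (kraft_sum_gt1_exp_growth all_gt1 k z0)
                 (kraft_sum_le R IL z0 qkl_gt0).
by rewrite ler_nat leqNgt => /negP[]; move: lt_exp; nia.
Qed.
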